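(* Let $p_1,\dots,p_n\ge0$, unit vectors $\vec a_1,\dots,\vec a_n\in\mathbb{R}^3$ with $\sum_ip_i=2$, $\sum_ip_i\vec a_i=\vec0$, and let $A^{1/2}_i=\frac{p_i}{2}\big(\mathds{1}+\tfrac12\vec a_i\cdot\vec\sigma\big)$. Let $f(\vec x)=\sum_ip_i\Theta(\vec x\cdot\vec a_i)$ and suppose (in the given coordinates) $f(\vec v_{s_xs_ys_z})\le1$ for all $(s_x,s_y,s_z)\in\{\pm1\}^3$. Define $$\alpha_i=\frac{p_i}{2}\Big(1-\frac14\sum_{s_x,s_y,s_z=\pm1}\Theta(\vec a_i\cdot\vec v_{s_xs_ys_z})\Big),$$ and for $\vec\lambda\in S_2$ with $s_k=\mathrm{sgn}(\lambda_k)$, $$p(i|\vec\lambda)=p_i\,\Theta(\vec a_i\cdot\vec v_{s_xs_ys_z})+\frac{(1-f(\vec v_{s_xs_ys_z}))\,\alpha_i}{\sum_j\alpha_j}$$ (with the second term taken to be $0$ if $\sum_j\alpha_j=0$). Then $\alpha_i\ge0$ for all $i$, $p(i|\vec\lambda)\ge0$, $\sum_ip(i|\vec\lambda)=1$ for all $\vec\lambda$, and $$\int_{S_2}p(i|\vec\lambda)\,\frac{1}{4\pi}(\mathds{1}+\vec\lambda\cdot\vec\sigma)\,\mathrm{d}\vec\lambda=A^{1/2}_i\quad\text{for all } i.$$ Moreover, $\sum_{s_x,s_y,s_z=\pm1}p_i\,\Theta(\vec a_i\cdot\vec v_{s_xs_ys_z})\,G_{s_xs_ys_z}=A^{1/2}_i-\alpha_i\mathds{1}$,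 where $G_{s_xs_ys_z}=\frac{\mathds{1}}{8}+\frac{\vec v_{s_xs_ys_z}\cdot\vec\sigma}{16}$.
   Context: $\Theta(x)=x$ for $x\ge0$ and $0$ for $x<0$; $\mathrm{sgn}(x)=+1$ if $x\ge0$ and $-1$ if $x<0$; $\vec v_{s_xs_ys_z}=(s_x,s_y,s_z)^T$; $\vec\sigma$ the Pauli vector; $S_2$ the unit sphere in $\mathbb{R}^3$ with surface measure $\mathrm{d}\vec\lambda$ of total mass $4\pi$. *)

From HB Require Import structures.
From mathcomp Require Import all_boot all_order all_algebra.
From mathcomp Require Import all_classical all_reals all_analysis.
From mathcomp Require Import complex.
Set Implicit Arguments. Unset Strict Implicit. Unset Printing Implicit Defensive.
Import Order.TTheory GRing.Theory Num.Theory.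
Local Open Scope ring_scope.
Local Open Scope classical_set_scope.

Section Defs.
Variable R : realType.

Definition vec3 := 'rV[R]_3.
Definition dot3 (u v : vec3) : R := \sum_(k < 3) u 0 k * v 0 k.

Definition Theta (x : R) : R := if 0 <= x then x else 0.
Definition sgn (x : R) : R := if 0 <= x then 1 else -1.

(* Sign patterns (s_x,s_y,s_z) in {+-1}^3, encoded by booleans (true = +1). *)
Definition signs := {ffun 'I_3 -> bool}.
Definition vsgn (s : signs) : vec3 := \row_k (if s k then 1 else -1).
Definition vlam (lam : vec3) : vec3 := \row_k sgn (lam 0 k).

Definition C := R[i].
Definition toC (x : R) : C := (x%:C)%C.
Definition iC : C := ('i)%C.
Definition mat2 := 'M[C]_2.
Definition sigma_x : mat2 := \matrix_(r < 2, c < 2) (if r == c then 0 else 1).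
Definition sigma_y : mat2 :=
  \matrix_(r < 2, c < 2)
    (if r == c then 0 else if (r : nat) == 0%N then - iC else iC).
Definition sigma_z : mat2 :=
  \matrix_(r < 2, c < 2)
    (if r == c then (if (r : nat) == 0%N then 1 else -1) else 0).
Definition pauli (k : 'I_3) : mat2 :=
  if (k : nat) == 0%N then sigma_x else if (k : nat) == 1%N then sigma_y
  else sigma_z.
Definition dotsigma (v : vec3) : mat2 := \sum_(k < 3) toC (v 0 k) *: pauli k.
Definition I2 : mat2 := 1%:M.

(* Spherical parametrisation of S_2 and the surface integral w.r.t. the
   standard surface measure (total mass 4 pi). *)
Definition sph (th ph : R) : vec3 :=
  \row_k (if (k : nat) == 0%N then sin th * cos ph
          else if (k : nat) == 1%N then sin th * sin ph else cos th).
Definition sphere_int (g : vec3 -> R) : R :=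
  Rintegral (@lebesgue_measure R) `[0, pi]%classic
    (fun th => Rintegral (@lebesgue_measure R) `[0, 2 * pi]%classic
       (fun ph => g (sph th ph) * sin th)).
Definition sphere_int_mx (F : vec3 -> mat2) : mat2 :=
  \matrix_(r < 2, c < 2)
    (toC (sphere_int (fun l => complex.Re (F l r c)))
     + iC * toC (sphere_int (fun l => complex.Im (F l r c)))).

Variables (n : nat) (p : 'I_n -> R) (a : 'I_n -> vec3).

Definition Ahalf (i : 'I_n) : mat2 :=
  toC (p i / 2) *: (I2 + toC (1 / 2) *: dotsigma (a i)).
Definition fPOVM (x : vec3) : R := \sum_(i < n) p i * Theta (dot3 x (a i)).
Definition alpha (i : 'I_n) : R :=
  p i / 2 * (1 - 1 / 4 * \sum_(s : signs) Theta (dot3 (a i) (vsgn s))).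
Definition pcond (i : 'I_n) (lam : vec3) : R :=
  p i * Theta (dot3 (a i) (vlam lam)) +
  (if \sum_(j < n) alpha j == 0 then 0
   else (1 - fPOVM (vlam lam)) * alpha i / \sum_(j < n) alpha j).
Definition Gs (s : signs) : mat2 :=
  toC (1 / 8) *: I2 + toC (1 / 16) *: dotsigma (vsgn s).

End Defs.

From HB Require Import structures.
From mathcomp Require Import all_boot all_order all_algebra.
From mathcomp Require Import all_classical all_reals all_analysis.
From mathcomp Require Import complex.
From mathcomp Require Import measurable_realfun.
From mathcomp Require Import ring lra.
Import Order.TTheory GRing.Theory Num.Theory.
Import numFieldNormedType.Exports.
Set Implicit Arguments. Unset Strict Implicit. Unset Printing Implicit Defensive.
Local Open Scope classical_set_scope.
Local Open Scope ring_scope.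

(** The conditional probabilities [pcond i lam] depend on [lam] only through
   its octant [s = sgn lam].  On an octant the sphere has area [pi / 2] and
   first moment [(pi / 4) v_s], so integrating [q (sgn lam) (1 + lam . sigma) / 4 pi]
   over the sphere gives [\sum_s q s G_s], and all matrix identities reduce to
   identities of the coefficients in the basis [1, sigma].  These follow from
   the sign sums [\sum_s v_s = 0] and [\sum_s Theta (a . v_s) v_s = 4 a]
   (as [Theta x - Theta (- x) = x]), and [alpha_i >= 0] from
   [\sum_s Theta (a . v_s) <= 4] for a unit vector [a]
   (as [Theta x + Theta (- x) = |x| <= (1 + x^2) / 2], and the squares of the
   four numbers [a . v_s] with [s_z = +1] sum to [4 |a|^2]). *)

Section interval_integrals.
Variable R : realType.
Local Notation mu := (@lebesgue_measure R).
Implicit Types (f g F G : R -> R) (a b c : R).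

Lemma integral_itv_cc_FTC F f a b : a <= b ->
  (forall x, is_derive x (1 : R) F (f x)) -> continuous f ->
  (\int[mu]_(x in `[a, b]) (f x)%:E = (F b - F a)%:E)%E.
Proof.
move=> ab dF cf; case: (eqVneq a b) => [<-|nab].
  by rewrite set_itv1 integral_set1 subrr.
have {nab} ab' : a < b by rewrite lt_neqAle nab.
have cF : continuous F.
  by move=> x; apply/differentiable_continuous/derivable1_diffP; case: (dF x).
rewrite EFinB (@continuous_FTC2 _ f F _ _ ab' (continuous_subspaceT cf))//.
- split; first by move=> x _; case: (dF x).
  + exact: cvg_within_filter (cF a).
  + exact: cvg_within_filter (cF b).
- by move=> x _; rewrite derive1E; case: (dF x).
Qed.

Lemma measurable_itv_oo_eq_continuous f g a b :
  {in `]a, b[, f =1 g} -> continuous g -> measurable_fun `]a, b[ (EFin \o f).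
Proof.
move=> fg cg; apply/measurable_EFinP.
apply: (@eq_measurable_fun _ _ _ _ _ g f).
- by move=> x /set_mem/= xab; rewrite fg.
- by apply: measurable_funTS; exact: continuous_measurable_fun.
Qed.

Lemma integral_itv_eq_FTC f g G a b (b0 b1 : bool) : a <= b ->
  (forall x, is_derive x (1 : R) G (g x)) -> continuous g -> {in `]a, b[, f =1 g} ->
  (\int[mu]_(x in [set` Interval (BSide b0 a) (BSide b1 b)]) (f x)%:E
    = (G b - G a)%:E)%E.
Proof.
move=> ab dG cg fg.
rewrite integral_itv_bndoo; last exact: measurable_itv_oo_eq_continuous fg cg.
transitivity (\int[mu]_(x in `]a, b[) (g x)%:E)%E.
  by apply: eq_integral => x /set_mem/= xab; rewrite fg.
rewrite -(@integral_itv_bndoo _ a b (fun x => (g x)%:E) true false).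
  exact: integral_itv_cc_FTC.
exact: measurable_itv_oo_eq_continuous.
Qed.

Lemma measurable_itv_oo_cc f a b :
  measurable_fun `]a, b[ (EFin \o f) -> measurable_fun `[a, b] (EFin \o f).
Proof.
move=> mf.
apply: (@measurable_funS _ _ _ _ (`]a, b[ `|` ([set a] `|` [set b]))).
- by apply: measurableU => //; apply: measurableU.
- move=> x /=; rewrite in_itv/= => /andP[ax xb].
  have [xa|xa] := eqVneq x a; first by right; left.
  have [xb'|xb'] := eqVneq x b; first by right; right.
  left; rewrite /= in_itv/=; apply/andP; split.
    by rewrite lt_neqAle eq_sym xa ax.
  by rewrite lt_neqAle xb' xb.
- apply/measurable_funU => //; first by apply: measurableU.
  split => //.
  by apply/measurable_funU => //; split; exact: measurable_fun_set1.
Qed.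

Lemma measurable_itv_cc_cat f a b c :
  measurable_fun `[a, b] (EFin \o f) -> measurable_fun `[b, c] (EFin \o f) ->
  measurable_fun `[a, c] (EFin \o f).
Proof.
move=> mab mbc.
apply: (@measurable_funS _ _ _ _ (`[a, b] `|` `[b, c])).
- exact: measurableU.
- move=> x /=; rewrite in_itv/= => /andP[ax xc].
  have [xb|xb] := leP x b; first by left; rewrite /= in_itv/= ax xb.
  by right; rewrite /= in_itv/= xc (ltW xb).
- exact/measurable_funU.
Qed.

Lemma measurable_itv_cc_sub f a b a' b' : a <= a' -> b' <= b ->
  measurable_fun `[a, b] (EFin \o f) -> measurable_fun `[a', b'] (EFin \o f).
Proof.
move=> aa' b'b mf; apply: (measurable_funS _ _ mf) => // x /=.
rewrite !in_itv/= => /andP[ax xb].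
by rewrite (le_trans aa' ax) (le_trans xb b'b).
Qed.

Lemma integral_itv_bndc_split f (b0 : bool) a b c : a <= b -> b <= c ->
  measurable_fun `[a, c] (EFin \o f) ->
  (\int[mu]_(x in [set` Interval (BSide b0 a) (BRight c)]) (f x)%:E =
   \int[mu]_(x in [set` Interval (BSide b0 a) (BRight b)]) (f x)%:E
   + \int[mu]_(x in `]b, c]) (f x)%:E)%E.
Proof.
move=> ab bc mac.
have h1 : (BSide b0 a <= BRight b)%O by case: b0; rewrite bnd_simp.
have h2 : (BRight b <= BRight c)%O by rewrite bnd_simp.
rewrite (@itv_bndbnd_setU _ _ (BSide b0 a) (BRight b) (BRight c) h1 h2).
rewrite integral_setU//=.
- rewrite -itv_bndbnd_setU//.
  apply: (measurable_funS _ _ mac) => // x /=; rewrite !in_itv/=.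
  by clear h1; case: b0 => /= /andP[ax ->]; rewrite ?andbT// ltW.
- apply/disj_setPS => y [/=]; rewrite 2!in_itv/= => /andP[_ yb] /andP[hby _].
  by move: (lt_le_trans hby yb); rewrite ltxx.
Qed.

Definition trig_lin (c0 c1 c2 x : R) := c0 + c1 * cos x + c2 * sin x.

Lemma continuous_trig_lin c0 c1 c2 : continuous (trig_lin c0 c1 c2).
Proof.
by move=> x; apply/differentiable_continuous/derivable1_diffP; apply: ex_derive.
Qed.

Lemma integral_trig_lin f c0 c1 c2 a b (b0 b1 : bool) : a <= b ->
  {in `]a, b[, f =1 trig_lin c0 c1 c2} ->
  (\int[mu]_(x in [set` Interval (BSide b0 a) (BSide b1 b)]) (f x)%:E
    = (c0 * (b - a) + c1 * (sin b - sin a) - c2 * (cos b - cos a))%:E)%E.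
Proof.
move=> ab fE.
have dG x : is_derive x (1 : R) (fun x => c0 * x + c1 * sin x - c2 * cos x)
    (trig_lin c0 c1 c2 x).
  by apply: trigger_derive; rewrite /trig_lin /GRing.scale /=; ring.
rewrite (integral_itv_eq_FTC _ _ ab dG (@continuous_trig_lin c0 c1 c2) fE).
by congr EFin; ring.
Qed.

Definition sin_quad (c0 c1 c2 x : R) :=
  c0 * sin x + c1 * (sin x * cos x) + c2 * (sin x * sin x).

Lemma continuous_sin_quad c0 c1 c2 : continuous (sin_quad c0 c1 c2).
Proof.
by move=> x; apply/differentiable_continuous/derivable1_diffP; apply: ex_derive.
Qed.

Lemma integral_sin_quad f c0 c1 c2 a b (b0 b1 : bool) : a <= b ->
  {in `]a, b[, f =1 sin_quad c0 c1 c2} ->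
  (\int[mu]_(x in [set` Interval (BSide b0 a) (BSide b1 b)]) (f x)%:E
    = (c0 * (cos a - cos b) + c1 * (sin b * sin b - sin a * sin a) / 2
       + c2 * ((b - sin b * cos b) - (a - sin a * cos a)) / 2)%:E)%E.
Proof.
move=> ab fE.
have dG x : is_derive x (1 : R) (fun x => - c0 * cos x + c1 * (sin x * sin x) / 2
    + c2 * (x - sin x * cos x) / 2) (sin_quad c0 c1 c2 x).
  apply: trigger_derive; rewrite /sin_quad /GRing.scale /=.
  have -> : cos x * cos x = 1 - sin x * sin x by rewrite -(cos2Dsin2 x); ring.
  by field; rewrite ?pnatr_eq0.
rewrite (integral_itv_eq_FTC _ _ ab dG (@continuous_sin_quad c0 c1 c2) fE).
by congr EFin; field; rewrite ?pnatr_eq0.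
Qed.

End interval_integrals.

Section quadrant_integrals.
Variable R : realType.
Local Notation mu := (@lebesgue_measure R).

Lemma quadrant1_cos_sin (x : R) : 0 < x < pi / 2 -> 0 < cos x /\ 0 < sin x.
Proof.
move=> /andP[h1 h2]; have := pi_gt0 R => hp.
split; [apply: cos_gt0_pihalf | apply: sin_gt0_pi]; apply/andP; split; lra.
Qed.

Lemma quadrant2_cos_sin (x : R) : pi / 2 < x < pi -> cos x < 0 /\ 0 < sin x.
Proof.
move=> /andP[h1 h2]; have := pi_gt0 R => hp.
split; last by apply: sin_gt0_pi; apply/andP; split; lra.
rewrite -(subrK (pi / 2) x) cosDpihalf oppr_lt0.
by apply: sin_gt0_pi; apply/andP; split; lra.
Qed.

Lemma quadrant3_cos_sin (x : R) : pi < x < pi + pi / 2 -> cos x < 0 /\ sin x < 0.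
Proof.
move=> /andP[h1 h2]; have := pi_gt0 R => hp.
have [|hc hs] := @quadrant1_cos_sin (x - pi); first by apply/andP; split; lra.
by rewrite -(subrK pi x) sinDpi cosDpi !oppr_lt0.
Qed.

Lemma quadrant4_cos_sin (x : R) :
  pi + pi / 2 < x < 2 * pi -> 0 < cos x /\ sin x < 0.
Proof.
move=> /andP[h1 h2]; have := pi_gt0 R => hp.
have [|hc hs] := @quadrant2_cos_sin (x - pi); first by apply/andP; split; lra.
by rewrite -(subrK pi x) sinDpi cosDpi oppr_lt0 oppr_gt0.
Qed.

Lemma Rintegral_circle_quadrants (K : bool -> bool -> R) (c0 c1 c2 : R) :
  Rintegral mu `[0, 2 * pi]
    (fun x => K (0 <= cos x) (0 <= sin x) * trig_lin c0 c1 c2 x) =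
  K true true * (c0 * (pi / 2) + c1 + c2) + K false true * (c0 * (pi / 2) - c1 + c2)
  + K false false * (c0 * (pi / 2) - c1 - c2) + K true false * (c0 * (pi / 2) + c1 - c2).
Proof.
have hp := pi_gt0 R.
set f := fun x => K (0 <= cos x) (0 <= sin x) * _.
pose piece bx bk := trig_lin (K bx bk * c0) (K bx bk * c1) (K bx bk * c2).
have pieceE bx bk x : K bx bk * trig_lin c0 c1 c2 x = piece bx bk x.
  by rewrite /piece /trig_lin; ring.
have E1 : {in `]0, pi / 2[, f =1 piece true true}.
  move=> x; rewrite in_itv/= => /quadrant1_cos_sin[hc hs].
  by rewrite /f (ltW hc) (ltW hs) pieceE.
have E2 : {in `]pi / 2, pi[, f =1 piece false true}.
  move=> x; rewrite in_itv/= => /quadrant2_cos_sin[hc hs].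
  by rewrite /f (lt_geF hc) (ltW hs) pieceE.
have E3 : {in `]pi, pi + pi / 2[, f =1 piece false false}.
  move=> x; rewrite in_itv/= => /quadrant3_cos_sin[hc hs].
  by rewrite /f (lt_geF hc) (lt_geF hs) pieceE.
have E4 : {in `]pi + pi / 2, 2 * pi[, f =1 piece true false}.
  move=> x; rewrite in_itv/= => /quadrant4_cos_sin[hc hs].
  by rewrite /f (ltW hc) (lt_geF hs) pieceE.
have h1 : (0 : R) <= pi / 2 by lra.
have h2 : pi / 2 <= pi :> R by lra.
have h3 : pi <= pi + pi / 2 :> R by lra.
have h4 : pi + pi / 2 <= 2 * pi :> R by lra.
have mf : measurable_fun `[0, 2 * pi] (EFin \o f).
  have m lo hi bx bk : {in `]lo, hi[, f =1 piece bx bk} ->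
      measurable_fun `[lo, hi] (EFin \o f).
    move=> hpiece; apply: measurable_itv_oo_cc.
    exact: measurable_itv_oo_eq_continuous hpiece (@continuous_trig_lin _ _ _ _).
  apply: (measurable_itv_cc_cat (m _ _ _ _ E1)).
  apply: (measurable_itv_cc_cat (m _ _ _ _ E2)).
  exact: (measurable_itv_cc_cat (m _ _ _ _ E3) (m _ _ _ _ E4)).
rewrite /Rintegral (@integral_itv_bndc_split _ f true 0 (pi + pi / 2))//; last lra.
rewrite (@integral_itv_bndc_split _ f true 0 pi); try lra; last first.
  by apply: (measurable_itv_cc_sub _ _ mf) => //; lra.
rewrite (@integral_itv_bndc_split _ f true 0 (pi / 2))//; last first.
  by apply: (measurable_itv_cc_sub _ _ mf) => //; lra.
rewrite (integral_trig_lin _ _ h1 E1) (integral_trig_lin _ _ h2 E2).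
rewrite (integral_trig_lin _ _ h3 E3) (integral_trig_lin _ _ h4 E4).
rewrite -!EFinD /= sin0 cos0 sin_pihalf cos_pihalf sinpi cospi.
have -> : sin (pi + pi / 2) = -1 :> R by rewrite addrC sinDpi sin_pihalf.
have -> : cos (pi + pi / 2) = 0 :> R by rewrite addrC cosDpi cos_pihalf oppr0.
by rewrite mulr_natl sin2pi cos2pi; field.
Qed.

Lemma Rintegral_hemispheres (F : R -> R) (A B C : bool -> R) :
  {in `]0, pi[, forall x,
     F x = sin_quad (A (0 <= cos x)) (B (0 <= cos x)) (C (0 <= cos x)) x} ->
  Rintegral mu `[0, pi] F =
  A true + B true / 2 + C true * (pi / 4) + (A false - B false / 2 + C false * (pi / 4)).
Proof.
move=> FE; have hp := pi_gt0 R.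
pose piece b := sin_quad (A b) (B b) (C b).
have E1 : {in `]0, pi / 2[, F =1 piece true}.
  move=> x; rewrite in_itv/= => /[dup] /andP[x0 x1] /quadrant1_cos_sin[hc _].
  by rewrite FE ?(ltW hc)// in_itv/= x0 /=; lra.
have E2 : {in `]pi / 2, pi[, F =1 piece false}.
  move=> x; rewrite in_itv/= => /[dup] /andP[x0 x1] /quadrant2_cos_sin[hc _].
  by rewrite FE ?(lt_geF hc)// in_itv/= x1 andbT; lra.
have h1 : (0 : R) <= pi / 2 by lra.
have h2 : pi / 2 <= pi :> R by lra.
have m lo hi b : {in `]lo, hi[, F =1 piece b} ->
    measurable_fun `[lo, hi] (EFin \o F).
  move=> hpiece; apply: measurable_itv_oo_cc.
  exact: measurable_itv_oo_eq_continuous hpiece (@continuous_sin_quad _ _ _ _).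
rewrite /Rintegral (@integral_itv_bndc_split _ F true 0 (pi / 2) pi)//; last first.
  exact: (measurable_itv_cc_cat (m _ _ _ E1) (m _ _ _ E2)).
rewrite (integral_sin_quad _ _ h1 E1) (integral_sin_quad _ _ h2 E2).
rewrite -!EFinD /= sin0 cos0 sin_pihalf cos_pihalf sinpi cospi.
by field.
Qed.

End quadrant_integrals.

Section octants.
Variable R : realType.

Definition o0 : 'I_3 := @Ordinal 3 0 isT.
Definition o1 : 'I_3 := @Ordinal 3 1 isT.
Definition o2 : 'I_3 := @Ordinal 3 2 isT.

Lemma ord3P (P : 'I_3 -> Prop) : P o0 -> P o1 -> P o2 -> forall k, P k.
Proof.
move=> h0 h1 h2 [[|[|[|k]]] hk] //.
- by rewrite (_ : Ordinal hk = o0) //; apply: val_inj.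
- by rewrite (_ : Ordinal hk = o1) //; apply: val_inj.
- by rewrite (_ : Ordinal hk = o2) //; apply: val_inj.
Qed.

Lemma sum_ord3 (V : nmodType) (F : 'I_3 -> V) :
  \sum_(k < 3) F k = F o0 + F o1 + F o2.
Proof.
rewrite !big_ord_recl big_ord0 addr0 addrA.
by congr (F _ + F _ + F _); apply: val_inj.
Qed.

Definition sgn3 (x y z : bool) : signs :=
  [ffun k : 'I_3 => if (k : nat) == 0%N then x
                    else if (k : nat) == 1%N then y else z].
Definition octant (l : vec3 R) : signs := [ffun k => 0 <= l 0 k].
Definition pm (b : bool) : R := if b then 1 else -1.

Lemma sum_signs (V : nmodType) (F : signs -> V) :
  \sum_(s : signs) F s =
  \sum_(x : bool) \sum_(y : bool) \sum_(z : bool) F (sgn3 x y z).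
Proof.
rewrite (reindex (fun t : bool * (bool * bool) => sgn3 t.1 t.2.1 t.2.2)) /=.
  under [RHS]eq_bigr do rewrite pair_big /=.
  by rewrite pair_big /=.
exists (fun s : signs => (s o0, (s o1, s o2))) => [[x [y z]] _|s _].
  by rewrite /sgn3 !ffunE.
by apply/ffunP; apply: ord3P; rewrite /sgn3 !ffunE.
Qed.

Lemma dot3E (u v : vec3 R) :
  dot3 u v = u 0 o0 * v 0 o0 + u 0 o1 * v 0 o1 + u 0 o2 * v 0 o2.
Proof. by rewrite /dot3 sum_ord3. Qed.

Lemma dot3C (u v : vec3 R) : dot3 u v = dot3 v u.
Proof. by rewrite !dot3E; ring. Qed.

Lemma dot3_sph (w : vec3 R) th ph : dot3 w (sph th ph) =
  w 0 o0 * (sin th * cos ph) + w 0 o1 * (sin th * sin ph) + w 0 o2 * cos th.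
Proof. by rewrite dot3E /sph !mxE. Qed.

Lemma dot3_vsgn (w : vec3 R) x y z : dot3 w (vsgn R (sgn3 x y z)) =
  w 0 o0 * pm x + w 0 o1 * pm y + w 0 o2 * pm z.
Proof. by rewrite dot3E /vsgn !mxE /sgn3 !ffunE. Qed.

Lemma octant_sph (th ph : R) : 0 < sin th ->
  octant (sph th ph) = sgn3 (0 <= cos ph) (0 <= sin ph) (0 <= cos th).
Proof.
move=> st; apply/ffunP; apply: ord3P.
all: by rewrite /octant /sgn3 !ffunE !mxE /= ?pmulr_rge0.
Qed.

Lemma vlamE (l : vec3 R) : vlam l = vsgn R (octant l).
Proof. by apply/rowP => k; rewrite !mxE /octant ffunE /sgn. Qed.

Lemma octant_vsgn (s : signs) : octant (vsgn R s) = s.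
Proof.
apply/ffunP => k; rewrite /octant ffunE mxE.
by case: (s k); rewrite ?ler01 // oppr_ge0 ler10.
Qed.

End octants.

Section sphere_integral.
Variable R : realType.
Local Notation mu := (@lebesgue_measure R).
Variables (Q : signs -> R) (e : R) (w : vec3 R).

Definition octant_affine (l : vec3 R) : R := Q (octant l) * (e + dot3 w l).

Definition hemisphere_mass (b : bool) :=
  Q (sgn3 true true b) + Q (sgn3 false true b)
  + Q (sgn3 false false b) + Q (sgn3 true false b).
Definition hemisphere_moment (b : bool) :=
  (w 0 o0 + w 0 o1) * Q (sgn3 true true b)
  + (- w 0 o0 + w 0 o1) * Q (sgn3 false true b)
  + (- w 0 o0 - w 0 o1) * Q (sgn3 false false b)
  + (w 0 o0 - w 0 o1) * Q (sgn3 true false b).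

Lemma azimuthal_integral_octant_affine (th : R) : 0 < sin th ->
  Rintegral mu `[0, 2 * pi] (fun ph => octant_affine (sph th ph) * sin th) =
  sin_quad (e * (pi / 2) * hemisphere_mass (0 <= cos th))
    (w 0 o2 * (pi / 2) * hemisphere_mass (0 <= cos th))
    (hemisphere_moment (0 <= cos th)) th.
Proof.
move=> st.
have -> : (fun ph => octant_affine (sph th ph) * sin th) =
    (fun ph => Q (sgn3 (0 <= cos ph) (0 <= sin ph) (0 <= cos th)) *
      trig_lin ((e + w 0 o2 * cos th) * sin th) (w 0 o0 * sin th * sin th)
        (w 0 o1 * sin th * sin th) ph).
  by apply: funext => ph; rewrite /octant_affine octant_sph// dot3_sph /trig_lin; ring.
rewrite (Rintegral_circle_quadrants (fun bx bk => Q (sgn3 bx bk (0 <= cos th)))).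
by rewrite /sin_quad /hemisphere_mass /hemisphere_moment; ring.
Qed.

Lemma sphere_int_octant_affine : sphere_int octant_affine =
  \sum_(s : signs) Q s * (e * (pi / 2) + dot3 w (vsgn R s) * (pi / 4)).
Proof.
rewrite /sphere_int (@Rintegral_hemispheres _ _
  (fun b => e * (pi / 2) * hemisphere_mass b)
  (fun b => w 0 o2 * (pi / 2) * hemisphere_mass b) hemisphere_moment).
  rewrite sum_signs !big_bool /= !dot3_vsgn /hemisphere_mass /hemisphere_moment /pm.
  by field.
move=> x; rewrite in_itv/= => x0pi.
by rewrite azimuthal_integral_octant_affine// sin_gt0_pi.
Qed.

End sphere_integral.

Section pauli_coordinates.
Variable R : realType.
Local Notation Re := (@complex.Re R).
Local Notation Im := (@complex.Im R).

Definition j0 : 'I_2 := @Ordinal 2 0 isT.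
Definition j1 : 'I_2 := @Ordinal 2 1 isT.

Lemma ord2P (P : 'I_2 -> Prop) : P j0 -> P j1 -> forall k, P k.
Proof.
move=> h0 h1 [[|[|k]] hk] //.
- by rewrite (_ : Ordinal hk = j0) //; apply: val_inj.
- by rewrite (_ : Ordinal hk = j1) //; apply: val_inj.
Qed.

Lemma complex_eq (x y : R[i]) : Re x = Re y -> Im x = Im y -> x = y.
Proof. by case: x => ? ?; case: y => ? ? /= -> ->. Qed.

Lemma Re_toCM (q : R) (z : R[i]) : Re (toC q * z) = q * Re z.
Proof. by case: z => x y /=; ring. Qed.

Lemma Im_toCM (q : R) (z : R[i]) : Im (toC q * z) = q * Im z.
Proof. by case: z => x y /=; ring. Qed.

Definition pauli_mx (c : R) (u : vec3 R) : mat2 R := toC c *: I2 R + dotsigma u.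

Local Ltac pauli_entry :=
  rewrite /pauli_mx /dotsigma !mxE summxE sum_ord3 /pauli /= !mxE /=;
  apply: complex_eq => /=; ring.

Lemma pauli_mx00 c u : pauli_mx c u j0 j0 = Complex (c + u 0 o2) 0.
Proof. by pauli_entry. Qed.
Lemma pauli_mx01 c u : pauli_mx c u j0 j1 = Complex (u 0 o0) (- u 0 o1).
Proof. by pauli_entry. Qed.
Lemma pauli_mx10 c u : pauli_mx c u j1 j0 = Complex (u 0 o0) (u 0 o1).
Proof. by pauli_entry. Qed.
Lemma pauli_mx11 c u : pauli_mx c u j1 j1 = Complex (c - u 0 o2) 0.
Proof. by pauli_entry. Qed.

Lemma dotsigmaD (u v : vec3 R) : dotsigma (u + v) = dotsigma u + dotsigma v.
Proof.
rewrite /dotsigma -big_split /=; apply: eq_bigr => k _.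
by rewrite mxE /toC rmorphD scalerDl.
Qed.

Lemma dotsigmaZ (c : R) (u : vec3 R) : dotsigma (c *: u) = toC c *: dotsigma u.
Proof.
rewrite /dotsigma scaler_sumr; apply: eq_bigr => k _.
by rewrite mxE /toC rmorphM scalerA.
Qed.

Lemma dotsigma0 : dotsigma (0 : vec3 R) = 0.
Proof. by rewrite /dotsigma big1 // => k _; rewrite mxE /toC rmorph0 scale0r. Qed.

Lemma dotsigma_sum (I : finType) (F : I -> vec3 R) :
  dotsigma (\sum_(i : I) F i) = \sum_(i : I) dotsigma (F i).
Proof. exact: (big_morph _ dotsigmaD dotsigma0). Qed.

Lemma pauli_mx1 (l : vec3 R) : pauli_mx 1 l = I2 R + dotsigma l.
Proof. by rewrite /pauli_mx /toC rmorph1 scale1r. Qed.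

Lemma pauli_mx_scalar (c : R) : pauli_mx c 0 = toC c *: I2 R.
Proof. by rewrite /pauli_mx dotsigma0 addr0. Qed.

Lemma scale_pauli_mx (t c : R) (u : vec3 R) :
  toC t *: pauli_mx c u = pauli_mx (t * c) (t *: u).
Proof. by rewrite /pauli_mx scalerDr scalerA /toC rmorphM dotsigmaZ. Qed.

Lemma sum_pauli_mx (I : finType) (c : I -> R) (u : I -> vec3 R) :
  \sum_(i : I) pauli_mx (c i) (u i) =
  pauli_mx (\sum_(i : I) c i) (\sum_(i : I) u i).
Proof. by rewrite /pauli_mx big_split /= dotsigma_sum -scaler_suml /toC rmorph_sum. Qed.

Lemma pauli_mxB_scalar (c d : R) (u : vec3 R) :
  pauli_mx c u - toC d *: I2 R = pauli_mx (c - d) u.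
Proof. by rewrite /pauli_mx /toC rmorphB scalerBl addrAC. Qed.

Lemma Gs_pauli_mx (s : signs) : Gs R s = pauli_mx (1 / 8) ((1 / 16) *: vsgn R s).
Proof. by rewrite /Gs /pauli_mx dotsigmaZ. Qed.

Lemma Ahalf_pauli_mx n (p : 'I_n -> R) (a : 'I_n -> vec3 R) i :
  Ahalf p a i = pauli_mx (p i / 2) ((p i / 4) *: a i).
Proof.
rewrite /Ahalf -dotsigmaZ -pauli_mx1 scale_pauli_mx mulr1 scalerA.
by congr (pauli_mx _ (_ *: _)); field.
Qed.

Definition row3 (x y z : R) : vec3 R :=
  \row_(k < 3) (if (k : nat) == 0%N then x else if (k : nat) == 1%N then y else z).

Lemma dot3_row3 x y z (l : vec3 R) :
  dot3 (row3 x y z) l = x * l 0 o0 + y * l 0 o1 + z * l 0 o2.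
Proof. by rewrite dot3E /row3 !mxE. Qed.

Lemma sphere_int_mx_octant_entry (Q : signs -> R) (r c : 'I_2)
    (e e' : R) (w w' : vec3 R) :
  (forall l, Re (pauli_mx 1 l r c) = e + dot3 w l) ->
  (forall l, Im (pauli_mx 1 l r c) = e' + dot3 w' l) ->
  sphere_int_mx (fun l => toC (Q (octant l)) *: pauli_mx 1 l) r c =
  Complex (\sum_(s : signs) Q s * (e * (pi / 2) + dot3 w (vsgn R s) * (pi / 4)))
          (\sum_(s : signs) Q s * (e' * (pi / 2) + dot3 w' (vsgn R s) * (pi / 4))).
Proof.
move=> hre him; rewrite /sphere_int_mx mxE -!sphere_int_octant_affine.
transitivity (toC (sphere_int (octant_affine Q e w))
              + iC R * toC (sphere_int (octant_affine Q e' w'))).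
  congr (toC (sphere_int _) + iC R * toC (sphere_int _)).
    by apply: funext => l /=; rewrite mxE Re_toCM hre.
  by apply: funext => l /=; rewrite mxE Im_toCM him.
by apply: complex_eq => /=; ring.
Qed.

Local Ltac expand_octant_sums :=
  rewrite ?summxE !sum_signs !big_bool /= !dot3_row3 !mxE /sgn3 !ffunE /=; ring.

Lemma sphere_int_mx_octant (Q : signs -> R) :
  sphere_int_mx (fun l => toC (Q (octant l)) *: pauli_mx 1 l) =
  pauli_mx (\sum_(s : signs) Q s * (pi / 2))
           (\sum_(s : signs) (Q s * (pi / 4)) *: vsgn R s).
Proof.
apply/matrixP => r c; move: r c; apply: ord2P; apply: ord2P.
- rewrite (@sphere_int_mx_octant_entry Q j0 j0 1 0 (row3 0 0 1) (row3 0 0 0)).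
  + by rewrite pauli_mx00; apply: complex_eq => /=; expand_octant_sums.
  + by move=> l; rewrite pauli_mx00 dot3_row3 /=; ring.
  + by move=> l; rewrite pauli_mx00 dot3_row3 /=; ring.
- rewrite (@sphere_int_mx_octant_entry Q j0 j1 0 0 (row3 1 0 0) (row3 0 (-1) 0)).
  + by rewrite pauli_mx01; apply: complex_eq => /=; expand_octant_sums.
  + by move=> l; rewrite pauli_mx01 dot3_row3 /=; ring.
  + by move=> l; rewrite pauli_mx01 dot3_row3 /=; ring.
- rewrite (@sphere_int_mx_octant_entry Q j1 j0 0 0 (row3 1 0 0) (row3 0 1 0)).
  + by rewrite pauli_mx10; apply: complex_eq => /=; expand_octant_sums.
  + by move=> l; rewrite pauli_mx10 dot3_row3 /=; ring.
  + by move=> l; rewrite pauli_mx10 dot3_row3 /=; ring.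
- rewrite (@sphere_int_mx_octant_entry Q j1 j1 1 0 (row3 0 0 (-1)) (row3 0 0 0)).
  + by rewrite pauli_mx11; apply: complex_eq => /=; expand_octant_sums.
  + by move=> l; rewrite pauli_mx11 dot3_row3 /=; ring.
  + by move=> l; rewrite pauli_mx11 dot3_row3 /=; ring.
Qed.


Lemma sphere_int_mx_octant_Gs (Q : signs -> R) :
  sphere_int_mx (fun l => toC (Q (octant l) / (4 * pi)) *: (I2 R + dotsigma l)) =
  \sum_(s : signs) toC (Q s) *: Gs R s.
Proof.
have pi_neq0 : pi != 0 :> R by rewrite gt_eqF // pi_gt0.
have -> : (fun l => toC (Q (octant l) / (4 * pi)) *: (I2 R + dotsigma l)) =
    (fun l => toC ((fun s => Q s / (4 * pi)) (octant l)) *: pauli_mx 1 l).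
  by apply: funext => l; rewrite pauli_mx1.
rewrite (sphere_int_mx_octant (fun s => Q s / (4 * pi))).
under [RHS]eq_bigr do rewrite Gs_pauli_mx scale_pauli_mx.
rewrite sum_pauli_mx; congr pauli_mx; apply: eq_bigr => s _.
  by move: (pi : R) pi_neq0 => P P_neq0; field.
by rewrite scalerA; congr (_ *: _); move: (pi : R) pi_neq0 => P P_neq0; field.
Qed.

End pauli_coordinates.

Section sign_sums.
Variable R : realType.

Lemma Theta_ge0 (x : R) : 0 <= Theta x.
Proof. by rewrite /Theta; case: ifP. Qed.

(* Stated for any [y = - x] so that [lra] can use them on the syntactic forms
   of the opposite dot products produced by expanding the sums over signs. *)
Lemma Theta_sub_opp (x y : R) : y = - x -> Theta x - Theta y = x.
Proof.
move=> ->; rewrite /Theta oppr_ge0.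
by case: (leP 0 x) => h; case: (leP x 0) => h'; lra.
Qed.

Lemma Theta_add_opp_le (x y : R) : y = - x -> Theta x + Theta y <= (x * x + 1) / 2.
Proof.
move=> ->; rewrite /Theta oppr_ge0.
have := sqr_ge0 (x - 1); have := sqr_ge0 (x + 1); rewrite !expr2 => h1 h2.
by case: (leP 0 x) => h; case: (leP x 0) => h'; nra.
Qed.

Lemma sum_signs_const : \sum_(s : signs) (1 : R) = 8.
Proof. by rewrite sum_signs !big_bool /=; ring. Qed.

Lemma sum_vsgn : \sum_(s : signs) vsgn R s = 0.
Proof.
apply/rowP; apply: ord3P; rewrite summxE !mxE sum_signs !big_bool /=.
all: by rewrite !mxE /sgn3 !ffunE /=; lra.
Qed.

Lemma sum_Theta_scale_vsgn (u : vec3 R) :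
  \sum_(s : signs) Theta (dot3 u (vsgn R s)) *: vsgn R s = 4 *: u.
Proof.
apply/rowP; apply: ord3P; rewrite summxE !mxE sum_signs !big_bool /=.
all: rewrite !mxE !dot3_vsgn /pm /sgn3 !ffunE /= ?mulr1 ?mulrN1.
all: set x := u 0 o0; set y := u 0 o1; set z := u 0 o2.
all: have := @Theta_sub_opp (x + y + z) (- x - y - z) ltac:(ring).
all: have := @Theta_sub_opp (x + y - z) (- x - y + z) ltac:(ring).
all: have := @Theta_sub_opp (x - y + z) (- x + y - z) ltac:(ring).
all: have := @Theta_sub_opp (x - y - z) (- x + y + z) ltac:(ring).
all: lra.
Qed.

Lemma sum_Theta_vsgn_le (u : vec3 R) : dot3 u u = 1 ->
  \sum_(s : signs) Theta (dot3 u (vsgn R s)) <= 4.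
Proof.
rewrite dot3E => u1.
rewrite sum_signs !big_bool /= !dot3_vsgn /pm ?mulr1 ?mulrN1.
set x := u 0 o0 in u1 *; set y := u 0 o1 in u1 *; set z := u 0 o2 in u1 *.
have := @Theta_add_opp_le (x + y + z) (- x - y - z) ltac:(ring).
have := @Theta_add_opp_le (x + y - z) (- x - y + z) ltac:(ring).
have := @Theta_add_opp_le (x - y + z) (- x + y - z) ltac:(ring).
have := @Theta_add_opp_le (x - y - z) (- x + y + z) ltac:(ring).
have : (x + y + z) * (x + y + z) + (x + y - z) * (x + y - z)
  + (x - y + z) * (x - y + z) + (x - y - z) * (x - y - z) = 4 by rewrite -u1; ring.
lra.
Qed.

Lemma sum_Theta_Gs (c : R) (u : vec3 R) :
  \sum_(s : signs) toC (c * Theta (dot3 u (vsgn R s))) *: Gs R s =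
  pauli_mx (c / 8 * \sum_(s : signs) Theta (dot3 u (vsgn R s))) ((c / 4) *: u).
Proof.
under eq_bigr do rewrite Gs_pauli_mx scale_pauli_mx scalerA.
rewrite sum_pauli_mx; congr pauli_mx.
  by rewrite mulr_sumr; apply: eq_bigr => s _; field.
rewrite (eq_bigr (fun s => (c / 16) *: (Theta (dot3 u (vsgn R s)) *: vsgn R s))).
  by rewrite -scaler_sumr sum_Theta_scale_vsgn scalerA; congr (_ *: _); field.
by move=> s _; rewrite scalerA; congr (_ *: _); field.
Qed.

Lemma pcond_octant n (p : 'I_n -> R) (a : 'I_n -> vec3 R) i (l : vec3 R) :
  pcond p a i l = pcond p a i (vsgn R (octant l)).
Proof. by rewrite /pcond !vlamE octant_vsgn. Qed.

Lemma sum_Theta_Gs_Ahalf n (p : 'I_n -> R) (a : 'I_n -> vec3 R) i :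
  \sum_(s : signs) toC (p i * Theta (dot3 (a i) (vsgn R s))) *: Gs R s =
  Ahalf p a i - toC (alpha p a i) *: I2 R.
Proof.
rewrite sum_Theta_Gs Ahalf_pauli_mx pauli_mxB_scalar /alpha.
by congr pauli_mx; field.
Qed.

End sign_sums.

Section conditional_distribution.
Variables (R : realType) (n : nat) (p : 'I_n -> R) (a : 'I_n -> vec3 R).
Hypotheses (p_ge0 : forall i, 0 <= p i) (a_unit : forall i, dot3 (a i) (a i) = 1).
Hypotheses (sum_p : \sum_(i < n) p i = 2) (sum_pa : \sum_(i < n) p i *: a i = 0).
Hypothesis fPOVM_le1 : forall s : signs, fPOVM p a (vsgn R s) <= 1.

Local Notation alpha_sum := (\sum_(j < n) alpha p a j).

Lemma alpha_ge0 i : 0 <= alpha p a i.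
Proof.
apply: mulr_ge0; first exact: divr_ge0.
by have := sum_Theta_vsgn_le (a_unit i); lra.
Qed.

Lemma fPOVM_vsgn s :
  fPOVM p a (vsgn R s) = \sum_(i < n) p i * Theta (dot3 (a i) (vsgn R s)).
Proof. by apply: eq_bigr => i _; rewrite dot3C. Qed.

Lemma sum_fPOVM_vsgn : \sum_(s : signs) fPOVM p a (vsgn R s) = 8 - 8 * alpha_sum.
Proof.
under eq_bigr do rewrite fPOVM_vsgn.
rewrite exchange_big /=.
rewrite (eq_bigr (fun i => 4 * p i - 8 * alpha p a i)); last first.
  by move=> i _; rewrite -mulr_sumr /alpha; field.
by rewrite sumrB -!mulr_sumr sum_p; ring.
Qed.

Lemma sum_fPOVM_scale_vsgn :
  \sum_(s : signs) fPOVM p a (vsgn R s) *: vsgn R s = 0.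
Proof.
under eq_bigr do rewrite fPOVM_vsgn scaler_suml.
rewrite exchange_big /=.
under eq_bigr => i _ do under eq_bigr do rewrite -scalerA.
under eq_bigr => i _ do rewrite -scaler_sumr sum_Theta_scale_vsgn scalerA mulrC -scalerA.
by rewrite -scaler_sumr sum_pa scaler0.
Qed.

Lemma sum_compl_fPOVM_Gs :
  \sum_(s : signs) toC (1 - fPOVM p a (vsgn R s)) *: Gs R s = toC alpha_sum *: I2 R.
Proof.
under eq_bigr do rewrite Gs_pauli_mx scale_pauli_mx.
rewrite sum_pauli_mx -pauli_mx_scalar.
congr pauli_mx.
  by rewrite -mulr_suml sumrB sum_signs_const sum_fPOVM_vsgn; field.
under eq_bigr do rewrite scalerA mulrC -scalerA scalerBl scale1r.
by rewrite -scaler_sumr sumrB sum_vsgn sum_fPOVM_scale_vsgn subr0 scaler0.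
Qed.

Lemma alpha_sum_eq0 : alpha_sum = 0 ->
  (forall i, alpha p a i = 0) /\ (forall s, fPOVM p a (vsgn R s) = 1).
Proof.
move=> Sa0; split.
  by move=> i; apply: (psumr_eq0P (P := predT) (fun j _ => alpha_ge0 j) Sa0).
have compl_ge0 (s : signs) : predT s -> 0 <= 1 - fPOVM p a (vsgn R s).
  by rewrite subr_ge0.
have : \sum_(s : signs) (1 - fPOVM p a (vsgn R s)) = 0.
  by rewrite sumrB sum_signs_const sum_fPOVM_vsgn Sa0; ring.
by move=> /(psumr_eq0P compl_ge0) h s; have := h s isT; lra.
Qed.

Lemma pcond_ge0 i (l : vec3 R) : 0 <= pcond p a i l.
Proof.
apply: addr_ge0; first by rewrite mulr_ge0 ?Theta_ge0.
case: eqP => // _; apply: divr_ge0; last by apply: sumr_ge0 => j _; exact: alpha_ge0.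
by rewrite mulr_ge0 ?alpha_ge0 // subr_ge0 vlamE fPOVM_le1.
Qed.

Lemma sum_pcond (l : vec3 R) : \sum_(i < n) pcond p a i l = 1.
Proof.
rewrite big_split /= vlamE.
rewrite (_ : \sum_(i < n) _ = fPOVM p a (vsgn R (octant l))); last first.
  by rewrite fPOVM_vsgn.
have [Sa0|Sa_neq0] := eqVneq alpha_sum 0.
  by rewrite big1 // addr0 (alpha_sum_eq0 Sa0).2.
by rewrite -mulr_suml -mulr_sumr; field.
Qed.

Lemma sum_pcond_Gs i :
  \sum_(s : signs) toC (pcond p a i (vsgn R s)) *: Gs R s = Ahalf p a i.
Proof.
rewrite /pcond; under eq_bigr do rewrite vlamE octant_vsgn /toC rmorphD scalerDl.
rewrite big_split /= sum_Theta_Gs_Ahalf.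
have [Sa0|Sa_neq0] := eqVneq alpha_sum 0.
  rewrite big1 => [|s _]; last by rewrite rmorph0 scale0r.
  by rewrite ((alpha_sum_eq0 Sa0).1 i) /toC rmorph0 scale0r subr0 addr0.
under eq_bigr do rewrite -mulrA mulrC rmorphM -scalerA.
rewrite -scaler_sumr sum_compl_fPOVM_Gs scalerA -rmorphM.
by rewrite divfK // subrK.
Qed.

End conditional_distribution.

Theorem mainTheorem7 (R : realType) (n : nat) (p : 'I_n -> R)
  (a : 'I_n -> vec3 R)
  (hp : forall i, 0 <= p i)
  (ha : forall i, dot3 (a i) (a i) = 1)
  (hsum : \sum_(i < n) p i = 2)
  (hbal : \sum_(i < n) p i *: a i = 0)
  (hf : forall s : signs, fPOVM p a (vsgn R s) <= 1) :
  (forall i, 0 <= alpha p a i) /\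
  (forall lam : vec3 R, dot3 lam lam = 1 ->
     (forall i, 0 <= pcond p a i lam) /\ \sum_(i < n) pcond p a i lam = 1) /\
  (forall i, sphere_int_mx
       (fun lam => toC (pcond p a i lam / (4 * pi)) *: (I2 R + dotsigma lam))
     = Ahalf p a i) /\
  (forall i, \sum_(s : signs) toC (p i * Theta (dot3 (a i) (vsgn R s))) *: Gs R s
     = Ahalf p a i - toC (alpha p a i) *: I2 R).
Proof.
split; first by move=> i; apply: alpha_ge0.
split.
  by move=> lam _; split; [move=> i; apply: pcond_ge0 | apply: sum_pcond].
split; last exact: sum_Theta_Gs_Ahalf.
move=> i; rewrite -(sum_pcond_Gs hp ha hsum hbal hf i) -sphere_int_mx_octant_Gs.
by congr sphere_int_mx; apply: funext => l; rewrite pcond_octant.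
Qed.
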